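(* Let $P,Q$ be probability distributions on a finite set $\mathcal{X}$, $\delta\in(0,1)$, and assume $\sum_x\min\{P(x),Q(x)\}<1-\delta$. Let $\lambda_P$ be such that $\tilde P(x) := \min\{P(x),\lambda_P Q(x)\}$ satisfies $\sum_x\tilde P(x) = 1-\delta$, and let $\lambda_Q$ be such that $\tilde Q(x) := \min\{Q(x),\tilde P(x)/\lambda_Q\}$ satisfies $\sum_x\tilde Q(x)=1-\delta$. Then $\lambda_P\ge1\ge\lambda_Q$, and for every $\alpha>1$, the pair $(P',Q') = (\tilde P/(1-\delta),\tilde Q/(1-\delta))$ attains the infimum defining the approximate Rényi divergence, i.e. $$D^\delta_\alpha(P\|Q) = D_\alpha\!\left(\tfrac{\tilde P}{1-\delta}\,\Big\|\,\tfrac{\tilde Q}{1-\delta}\right).$$ In particular the minimizing pair does not depend on $\alpha$.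
   Context: For $\alpha>1$, $D_\alpha(P\|Q)=\frac{1}{\alpha-1}\log\sum_x P(x)^\alpha Q(x)^{1-\alpha}$ (infinite if $P$ is not absolutely continuous w.r.t. $Q$), and $D^\delta_\alpha(P\|Q)=\inf\{D_\alpha(P'\|Q'): P=(1-\delta)P'+\delta P'',\ Q=(1-\delta)Q'+\delta Q''\}$ over probability distributions $P',P'',Q',Q''$, equivalently over distributions $P',Q'$ with $P'\le P/(1-\delta)$ and $Q'\le Q/(1-\delta)$ pointwise. *)

From HB Require Import structures.
From mathcomp Require Import all_boot all_order all_algebra.
From mathcomp Require Import all_classical all_reals all_analysis.
Set Implicit Arguments. Unset Strict Implicit. Unset Printing Implicit Defensive.
Import Order.TTheory GRing.Theory Num.Theory.
Local Open Scope ring_scope.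

Definition is_distr (R : realType) (X : finType) (P : X -> R) : Prop :=
  (forall x, 0 <= P x) /\ \sum_(x : X) P x = 1.

(* Renyi divergence of order a (> 1): +oo unless P << Q; otherwise
   1/(a-1) * ln (sum_x P(x)^a Q(x)^(1-a)), terms with P(x) = 0 contributing 0
   (with powR, 0 `^ a = 0 for a <> 0). *)
Definition renyi (R : realType) (X : finType) (a : R) (P Q : X -> R) : \bar R :=
  if [forall x, (Q x == 0) ==> (P x == 0)]
  then ((a - 1)^-1 * ln (\sum_(x : X) (P x `^ a) * (Q x `^ (1 - a))))%:E
  else +oo%E.

Definition approx_renyi (R : realType) (X : finType) (delta a : R) (P Q : X -> R)
  : \bar R :=
  ereal_inf [set r | exists P' P'' Q' Q'' : X -> R,
    [/\ is_distr P', is_distr P'', is_distr Q' & is_distr Q''] /\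
    (forall x, P x = (1 - delta) * P' x + delta * P'' x) /\
    (forall x, Q x = (1 - delta) * Q' x + delta * Q'' x) /\
    r = renyi a P' Q'].

From HB Require Import structures.
From mathcomp Require Import all_boot all_order all_algebra.
From mathcomp Require Import all_classical all_reals all_analysis.
From mathcomp Require Import ring lra.
Import Order.TTheory GRing.Theory Num.Theory.
Local Open Scope ring_scope.

(* The map (p, q) |-> p^a q^(1-a) is convex and positively homogeneous, hence lies
   above its tangent planes a r^(a-1) p - (a-1) r^a q, with equality on the ray p = r q.
   The trimmed pair lies on the ray whose slope r(x) is the likelihood ratio P/Q clipped
   to [lamQ, lamP]: where r < lamP the trimmed P already equals P, and where r > lamQ the
   trimmed Q equals Q.  A competing pair (P', Q') satisfies P' <= P/(1-delta) and
   Q' <= Q/(1-delta), so it exceeds the trimmed pair in its first coordinate only where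
   r = lamP and in its second only where r = lamQ.  Summing the tangent inequalities at
   slope r(x), the correction terms can therefore be evaluated at the constant slopes
   lamP and lamQ, where they cancel because both pairs have total mass one. *)

Section PowRTangent.
Context {R : realType}.

Lemma powR_ge_tangent (a r t : R) : 1 < a -> 0 <= t -> 0 <= r ->
  a * r `^ (a - 1) * t <= t `^ a + (a - 1) * r `^ a.
Proof.
move=> a_gt1 t_ge0 r_ge0.
have a_gt0 : 0 < a by lra.
have am1_neq0 : a - 1 != 0 by rewrite gt_eqF // subr_gt0.
have conj_gt0 : 0 < a / (a - 1) by rewrite divr_gt0 ?subr_gt0.
have conj_exp : (a / (a - 1))^-1 + a^-1 = 1 by rewrite invf_div; field; rewrite gt_eqF.
have := ler_wpM2l (ltW a_gt0) (conjugate_powR (powR_ge0 r (a - 1)) t_ge0 conj_gt0 a_gt0 conj_exp).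
rewrite -powRrM.
have -> : (a - 1) * (a / (a - 1)) = a by field.
have -> : a * (r `^ a / (a / (a - 1)) + t `^ a / a) = t `^ a + (a - 1) * r `^ a.
  by field; rewrite gt_eqF.
by rewrite mulrA.
Qed.

Lemma perspective_ge_tangent (a p q r : R) : 1 < a -> 0 <= p -> 0 <= q -> 0 <= r ->
  (q = 0 -> p = 0) ->
  a * r `^ (a - 1) * p - (a - 1) * r `^ a * q <= p `^ a * q `^ (1 - a).
Proof.
move=> a_gt1 p_ge0 q_ge0 r_ge0 pq0.
have a_gt0 : 0 < a by lra.
have [q0|q_neq0] := eqVneq q 0.
  by rewrite (pq0 q0) q0 !mulr0 subr0 (powR0 (lt0r_neq0 a_gt0)) mul0r.
have q_gt0 : 0 < q by rewrite lt_neqAle eq_sym q_neq0.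
have homog : p `^ a * q `^ (1 - a) = (p / q) `^ a * q.
  rewrite -[p in LHS](divfK q_neq0) [(_ * q) `^ a]powRM ?divr_ge0 //.
  rewrite -mulrA -powRD; last by rewrite q_neq0 implybT.
  by rewrite addrC subrK powRr1.
have := ler_wpM2r (ltW q_gt0) (powR_ge_tangent _ _ _ a_gt1 (divr_ge0 p_ge0 (ltW q_gt0)) r_ge0).
by rewrite homog mulrDl -[_ * (p / q) * q]mulrA divfK //; lra.
Qed.

Lemma perspective_tangent_eq (a q r : R) : 1 < a -> 0 <= q -> 0 <= r ->
  (r * q) `^ a * q `^ (1 - a) = a * r `^ (a - 1) * (r * q) - (a - 1) * r `^ a * q.
Proof.
move=> a_gt1 q_ge0 r_ge0.
have a_gt0 : 0 < a by lra.
have [->|q_neq0] := eqVneq q 0.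
  by rewrite !mulr0 subr0 (powR0 (lt0r_neq0 a_gt0)) mul0r.
rewrite powRM // -mulrA -powRD; last by rewrite q_neq0 implybT.
rewrite addrC subrK powRr1 // mulrA -[_ * r]mulrA [_ `^ _ * r]mulrC mulr_powRB1 //.
ring.
Qed.

End PowRTangent.

Lemma sum_perspective_le {R : realType} {X : finType} (a lo hi : R)
    (p q p' q' r : X -> R) :
  1 < a -> 0 <= lo -> (forall x, lo <= r x <= hi) ->
  (forall x, 0 <= q x) -> (forall x, p x = r x * q x) ->
  (forall x, 0 <= p' x) -> (forall x, 0 <= q' x) -> (forall x, q' x = 0 -> p' x = 0) ->
  \sum_x p' x = \sum_x p x -> \sum_x q' x = \sum_x q x ->
  (forall x, r x < hi -> p' x <= p x) -> (forall x, lo < r x -> q' x <= q x) ->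
  \sum_x p x `^ a * q x `^ (1 - a) <= \sum_x p' x `^ a * q' x `^ (1 - a).
Proof.
move=> a_gt1 lo_ge0 r_in q_ge0 p_eq p'_ge0 q'_ge0 p'_abs sum_p' sum_q' p'_le q'_le.
pose shift x := a * hi `^ (a - 1) * (p' x - p x) - (a - 1) * lo `^ a * (q' x - q x).
have sum_shift : \sum_x shift x = 0.
  by rewrite sumrB -!mulr_sumr !sumrB sum_p' sum_q' !subrr !mulr0 subrr.
have shift_le x : p x `^ a * q x `^ (1 - a) + shift x
                  <= a * r x `^ (a - 1) * p' x - (a - 1) * r x `^ a * q' x.
  have /andP[lo_le hi_ge] := r_in x.
  have hi_term : 0 <= (r x `^ (a - 1) - hi `^ (a - 1)) * (p' x - p x).
    case: (ltgtP (r x) hi) hi_ge => [r_lt|//|->]; last by rewrite subrr mul0r.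
    rewrite mulr_le0 // subr_le0 ?p'_le //.
    by apply: ge0_ler_powR; rewrite ?nnegrE; lra.
  have lo_term : (r x `^ a - lo `^ a) * (q' x - q x) <= 0.
    case: (ltgtP lo (r x)) lo_le => [lo_lt|//|<-]; last by rewrite subrr mul0r.
    rewrite mulr_ge0_le0 // ?subr_le0 ?q'_le // subr_ge0.
    by apply: ge0_ler_powR; rewrite ?nnegrE; lra.
  rewrite p_eq perspective_tangent_eq //; last lra.
  rewrite -p_eq /shift; nra.
have -> : \sum_x p x `^ a * q x `^ (1 - a) = \sum_x (p x `^ a * q x `^ (1 - a) + shift x).
  by rewrite big_split /= sum_shift addr0.
apply: ler_sum => x _; apply: le_trans (shift_le x) _.
apply: perspective_ge_tangent (p'_abs x) => //.
by have /andP[lo_le _] := r_in x; exact: le_trans lo_le.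
Qed.

Section Mixtures.
Context {R : realType} {X : finType}.

Lemma mixture_le (delta p p' p'' : R) : 0 <= delta -> delta < 1 -> 0 <= p'' ->
  p = (1 - delta) * p' + delta * p'' -> p' <= p / (1 - delta).
Proof.
move=> delta_ge0 delta_lt1 p''_ge0 ->.
rewrite ler_pdivlMr ?subr_gt0 // mulrC lerDl.
exact: mulr_ge0.
Qed.

Lemma decompose_distr {delta : R} {P T : X -> R} : is_distr P -> 0 < delta -> delta < 1 ->
  (forall x, 0 <= T x) -> (forall x, T x <= P x) -> \sum_x T x = 1 - delta ->
  is_distr (fun x => T x / (1 - delta)) /\
  exists2 P'' : X -> R, is_distr P'' &
    forall x, P x = (1 - delta) * (T x / (1 - delta)) + delta * P'' x.
Proof.
move=> [_ sumP] delta_gt0 delta_lt1 T_ge0 T_le sumT.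
have c_neq0 : 1 - delta != 0 by rewrite gt_eqF // subr_gt0.
split.
  split=> [x|]; first by rewrite divr_ge0 ?T_ge0 // subr_ge0 ltW.
  by rewrite -mulr_suml sumT divff.
exists (fun x => (P x - T x) / delta).
  split=> [x|]; first by rewrite divr_ge0 ?subr_ge0 ?T_le // ltW.
  by rewrite -mulr_suml sumrB sumP sumT opprB addrC subrK divff // gt_eqF.
by move=> x; field; rewrite c_neq0 gt_eqF.
Qed.

End Mixtures.

Section Renyi.
Context {R : realType} {X : finType}.

Lemma abs_contP (P Q : X -> R) :
  reflect (forall x, Q x = 0 -> P x = 0) [forall x, (Q x == 0) ==> (P x == 0)].
Proof.
apply: (iffP forallP) => [abs x /eqP Qx0|abs x].
  by apply/eqP; move/implyP: (abs x); apply.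
by apply/implyP => /eqP /abs ->.
Qed.

Lemma sum_powR_gt0 (a : R) (P Q : X -> R) : is_distr P ->
  (forall x, Q x = 0 -> P x = 0) -> 0 < \sum_x P x `^ a * Q x `^ (1 - a).
Proof.
move=> [P_ge0 sumP] abs.
have [x Px_neq0] : exists x, P x != 0.
  apply/existsP; apply: contraT; rewrite negb_exists => /forallP P0.
  by move: sumP; rewrite big1 => [/eqP|y _]; [rewrite eq_sym oner_eq0 | apply/eqP/negPn].
have Qx_neq0 : Q x != 0 by apply: contra Px_neq0 => /eqP /abs ->.
rewrite (bigD1 x) //= ltr_pwDl ?sumr_ge0 // => [|y _]; last by rewrite mulr_ge0 ?powR_ge0.
by rewrite mulr_gt0 // lt0r powR_ge0 powR_eq0 ?(negbTE Px_neq0) ?(negbTE Qx_neq0).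
Qed.

Lemma renyi_le (a : R) (P Q P' Q' : X -> R) : 1 < a ->
  (forall x, Q x = 0 -> P x = 0) -> 0 < \sum_x P x `^ a * Q x `^ (1 - a) ->
  ((forall x, Q' x = 0 -> P' x = 0) ->
     \sum_x P x `^ a * Q x `^ (1 - a) <= \sum_x P' x `^ a * Q' x `^ (1 - a)) ->
  (renyi a P Q <= renyi a P' Q')%E.
Proof.
move=> a_gt1 abs sum_gt0 sum_le; rewrite /renyi.
case: abs_contP => // _; case: abs_contP => [abs'|_]; last exact: leey.
have sum_le' := sum_le abs'.
rewrite lee_fin; apply: ler_wpM2l; first by rewrite invr_ge0 subr_ge0 ltW.
by rewrite ler_ln ?posrE // (lt_le_trans sum_gt0).
Qed.

End Renyi.

Lemma ereal_inf_attained {R : realType} (S : set (\bar R)) y :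
  S y -> (forall z, S z -> (y <= z)%E) -> ereal_inf S = y.
Proof.
by move=> Sy y_lb; apply/le_anti/andP; split; [exact: ereal_inf_lbound | apply/ereal_infP].
Qed.

Section Trim.
Context {R : realType} {X : finType}.
Variables (P Q : X -> R) (lP lQ : R).
Hypotheses (P_ge0 : forall x, 0 <= P x) (Q_ge0 : forall x, 0 <= Q x).

Definition trimP x := Num.min (P x) (lP * Q x).
Definition trimQ x := Num.min (Q x) (trimP x / lQ).

(* The likelihood ratio [P / Q], read as [+oo] where [Q] vanishes, clipped to [[lQ, lP]]. *)
Definition clipped_ratio x :=
  if Q x == 0 then lP else Num.min lP (Num.max lQ (P x / Q x)).

Lemma trimP_le x : trimP x <= P x.
Proof. by rewrite ge_min lexx. Qed.

Lemma trimQ_le x : trimQ x <= Q x.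
Proof. by rewrite ge_min lexx. Qed.

Lemma trimP_ge0 : 0 <= lP -> forall x, 0 <= trimP x.
Proof. by move=> lP_ge0 x; rewrite le_min P_ge0 mulr_ge0. Qed.

Lemma trimP_lambda_ge1 s :
  \sum_x Num.min (P x) (Q x) < s -> \sum_x trimP x = s -> 1 <= lP.
Proof.
move=> overlap_lt sum_trim; rewrite leNgt; apply/negP => lP_lt1.
suff : \sum_x trimP x <= \sum_x Num.min (P x) (Q x) by lra.
apply: ler_sum => x _; apply: le_min2 => //.
by rewrite ler_piMl // ltW.
Qed.

Lemma trimQ_lambda_gt0 s : 0 <= lP -> 0 < s -> \sum_x trimQ x = s -> 0 < lQ.
Proof.
move=> lP_ge0 s_gt0 sum_trim; rewrite ltNge; apply/negP => lQ_le0.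
suff : \sum_x trimQ x <= 0 by lra.
apply: sumr_le0 => x _; rewrite ge_min; apply/orP; right.
by rewrite mulr_ge0_le0 ?invr_le0 ?trimP_ge0.
Qed.

Lemma trimQ_lambda_le1 s : 0 <= lP ->
  \sum_x Num.min (P x) (Q x) < s -> \sum_x trimQ x = s -> lQ <= 1.
Proof.
move=> lP_ge0 overlap_lt sum_trim; rewrite leNgt; apply/negP => lQ_gt1.
suff : \sum_x trimQ x <= \sum_x Num.min (P x) (Q x) by lra.
apply: ler_sum => x _; rewrite le_min trimQ_le andbT ge_min; apply/orP; right.
have lQ_gt0 : 0 < lQ by lra.
apply: le_trans (trimP_le x).
by rewrite ler_pdivrMr // ler_peMr ?trimP_ge0 // ltW.
Qed.

Hypotheses (lQ_gt0 : 0 < lQ) (lQ_le_lP : lQ <= lP).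

Lemma trimQ_ge0 x : 0 <= trimQ x.
Proof.
have lP_ge0 : 0 <= lP := le_trans (ltW lQ_gt0) lQ_le_lP.
by rewrite le_min Q_ge0 divr_ge0 ?trimP_ge0 // ltW.
Qed.

Lemma clipped_ratio_in x : lQ <= clipped_ratio x <= lP.
Proof.
rewrite /clipped_ratio; case: ifP => _; first by rewrite lQ_le_lP lexx.
by rewrite ge_min lexx le_min lQ_le_lP le_max lexx.
Qed.

Lemma trimP_ratio x : trimP x = clipped_ratio x * trimQ x.
Proof.
rewrite /clipped_ratio /trimQ /trimP.
have [Qx0|Qx_neq0] := eqVneq (Q x) 0.
  by rewrite Qx0 mulr0 (min_r (P_ge0 x)) mul0r minxx mulr0.
have Qx_gt0 : 0 < Q x by rewrite lt_neqAle eq_sym Qx_neq0 Q_ge0.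
have [lPQ_le|P_lt] := leP (lP * Q x) (P x).
  rewrite [Num.min lP _]min_l; last first.
    by rewrite le_max ler_pdivlMr // lPQ_le orbT.
  by rewrite min_l // ler_pdivlMr // mulrC ler_pM2r.
have [lQQ_le|P_lt'] := leP (lQ * Q x) (P x).
  have ratio_ge : lQ <= P x / Q x by rewrite ler_pdivlMr.
  have ratio_le : P x / Q x <= lP by rewrite ler_pdivrMr // ltW.
  rewrite (max_r ratio_ge) (min_r ratio_le) min_l ?divfK //.
  by rewrite ler_pdivlMr // mulrC.
have ratio_le : P x / Q x <= lQ by rewrite ler_pdivrMr // ltW.
rewrite (max_l ratio_le) (min_r lQ_le_lP) min_r; last first.
  by rewrite ler_pdivrMr // mulrC ltW.
by rewrite mulrC divfK // gt_eqF.
Qed.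

Lemma trimP_eq_of_ratio_lt x : clipped_ratio x < lP -> trimP x = P x.
Proof.
rewrite /clipped_ratio; case: ifPn => [_|Qx_neq0]; first by rewrite ltxx.
have Qx_gt0 : 0 < Q x by rewrite lt_neqAle eq_sym Qx_neq0 Q_ge0.
rewrite gt_min ltxx /= gt_max => /andP[_].
by rewrite ltr_pdivrMr // => /ltW; apply: min_l.
Qed.

Lemma trimQ_eq_of_ratio_gt x : lQ < clipped_ratio x -> trimQ x = Q x.
Proof.
rewrite /clipped_ratio /trimQ /trimP; case: ifPn => [/eqP Qx0 _|Qx_neq0].
  by rewrite Qx0 mulr0 (min_r (P_ge0 x)) mul0r minxx.
have Qx_gt0 : 0 < Q x by rewrite lt_neqAle eq_sym Qx_neq0 Q_ge0.
rewrite lt_min lt_max ltxx /= => /andP[_].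
rewrite ltr_pdivlMr // => /ltW lQQ_le.
by rewrite min_l // ler_pdivlMr // le_min mulrC lQQ_le ler_pM2r.
Qed.

Lemma renyi_trim_le {delta a : R} {P' P'' Q' Q'' : X -> R} :
  1 < a -> 0 <= delta -> delta < 1 ->
  is_distr (fun x => trimP x / (1 - delta)) -> is_distr (fun x => trimQ x / (1 - delta)) ->
  is_distr P' -> is_distr Q' -> (forall x, 0 <= P'' x) -> (forall x, 0 <= Q'' x) ->
  (forall x, P x = (1 - delta) * P' x + delta * P'' x) ->
  (forall x, Q x = (1 - delta) * Q' x + delta * Q'' x) ->
  (renyi a (fun x => (trimP x / (1 - delta))%R) (fun x => (trimQ x / (1 - delta))%R)
   <= renyi a P' Q')%E.
Proof.
move=> a_gt1 delta_ge0 delta_lt1 dPt dQt [P'_ge0 sumP'] [Q'_ge0 sumQ'] P''_ge0 Q''_ge0 eP eQ.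
have trim_eq x : trimP x / (1 - delta) = clipped_ratio x * (trimQ x / (1 - delta)).
  by rewrite trimP_ratio mulrA.
have abs x : trimQ x / (1 - delta) = 0 -> trimP x / (1 - delta) = 0.
  by rewrite trim_eq => ->; rewrite mulr0.
apply: renyi_le => // [|abs']; first exact: sum_powR_gt0.
apply: (sum_perspective_le a lQ lP _ _ _ _ clipped_ratio) => //.
- exact: ltW.
- exact: clipped_ratio_in.
- by case: dQt.
- by case: dPt => _ ->.
- by case: dQt => _ ->.
- move=> x /trimP_eq_of_ratio_lt ->.
  exact: mixture_le (P''_ge0 x) (eP x).
- move=> x /trimQ_eq_of_ratio_gt ->.
  exact: mixture_le (Q''_ge0 x) (eQ x).
Qed.

End Trim.

Arguments trimP_ge0 {R X P Q lP}.
Arguments trimP_lambda_ge1 {R X P Q lP} Q_ge0 {s}.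
Arguments trimQ_lambda_gt0 {R X P Q lP lQ} P_ge0 Q_ge0 {s}.
Arguments trimQ_lambda_le1 {R X P Q lP lQ} P_ge0 Q_ge0 {s}.
Arguments trimQ_ge0 {R X P Q lP lQ}.
Arguments renyi_trim_le {R X P Q lP lQ} P_ge0 Q_ge0 lQ_gt0 lQ_le_lP {delta a P' P'' Q' Q''}.

Theorem mainTheorem9 (R : realType) (X : finType) (P Q : X -> R) (delta : R)
  (hP : is_distr P) (hQ : is_distr Q) (hd0 : 0 < delta) (hd1 : delta < 1)
  (hov : \sum_(x : X) Num.min (P x) (Q x) < 1 - delta)
  (lamP : R)
  (hlamP : \sum_(x : X) Num.min (P x) (lamP * Q x) = 1 - delta)
  (lamQ : R)
  (hlamQ : \sum_(x : X) Num.min (Q x) (Num.min (P x) (lamP * Q x) / lamQ)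
           = 1 - delta) :
  1 <= lamP /\ lamQ <= 1 /\
  forall a : R, 1 < a ->
    approx_renyi delta a P Q =
    renyi a (fun x => Num.min (P x) (lamP * Q x) / (1 - delta))
            (fun x => Num.min (Q x) (Num.min (P x) (lamP * Q x) / lamQ)
                      / (1 - delta)).
Proof.
have [P_ge0 _] := hP; have [Q_ge0 _] := hQ.
have c_gt0 : 0 < 1 - delta by lra.
have lamP_ge1 := trimP_lambda_ge1 Q_ge0 hov hlamP.
have lamP_ge0 : 0 <= lamP by lra.
have lamQ_gt0 := trimQ_lambda_gt0 P_ge0 Q_ge0 lamP_ge0 c_gt0 hlamQ.
have lamQ_le1 := trimQ_lambda_le1 P_ge0 Q_ge0 lamP_ge0 hov hlamQ.
split=> //; split=> // a a_gt1.
change (approx_renyi delta a P Q = renyi a (fun x => trimP P Q lamP x / (1 - delta))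
                                           (fun x => trimQ P Q lamP lamQ x / (1 - delta))).
have lamQ_le_lamP : lamQ <= lamP by lra.
have [dPt [Pr dPr eP]] := decompose_distr hP hd0 hd1
  (trimP_ge0 P_ge0 Q_ge0 lamP_ge0) (trimP_le P Q lamP) hlamP.
have [dQt [Qr dQr eQ]] := decompose_distr hQ hd0 hd1
  (trimQ_ge0 P_ge0 Q_ge0 lamQ_gt0 lamQ_le_lamP) (trimQ_le P Q lamP lamQ) hlamQ.
apply: ereal_inf_attained.
  by exists (fun x => trimP P Q lamP x / (1 - delta)), Pr,
            (fun x => trimQ P Q lamP lamQ x / (1 - delta)), Qr.
move=> _ [P' [P'' [Q' [Q'' [[dP' [P''_ge0 _] dQ' [Q''_ge0 _]] [eP' [eQ' ->]]]]]]].
exact: (renyi_trim_le P_ge0 Q_ge0 lamQ_gt0 lamQ_le_lamP a_gt1 (ltW hd0) hd1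
          dPt dQt dP' dQ' P''_ge0 Q''_ge0 eP' eQ').
Qed.
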